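(* Let $0\le\sigma<1$ and $f\colon[0,1]\to\mathbb R$ with $f_\sigma(x)=f(x)/x^\sigma$ integrable on $[0,1]$, and let $\bar f_\sigma=f_\sigma-\int_0^1f_\sigma(t)dt$. Let $(\varpi(n))_{n\ge1}$ be positive reals such that $\sum_{n\ge1}1/\varpi(n)$ converges, and put $\rho(d)=\sum_{n\ge d}1/\varpi(n)$. Assume $$\sum_{d\ge1}d^{1-2\sigma}\rho(d)\,|R_{\bar f_\sigma}(d)|<\infty.$$ Then $\sum_{n\ge1}\frac{|\Theta_{n,\sigma}(f)|}{\varpi(n)}<\infty$, where $\Theta_{n,\sigma}(f)=S_{n,\sigma}(f)-\big(\int_0^1f_\sigma(t)dt\big)\sum_{1\le\ell\le n}\ell^{1-2\sigma}$.
   Context: $S_{n,\sigma}(f)=\sum_{1\le k\le\ell\le n}\frac{1}{(k\ell)^\sigma}f\big(\frac k\ell\big)$. For a function $h$ on $(0,1]$, $R_h(d)=\frac1d\sum_{k=1}^d h(k/d)$. *)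

From HB Require Import structures.
From mathcomp Require Import all_boot all_order all_algebra.
From mathcomp Require Import all_classical all_reals all_analysis.
Set Implicit Arguments. Unset Strict Implicit. Unset Printing Implicit Defensive.
Import Order.TTheory GRing.Theory Num.Theory.
Import numFieldNormedType.Exports.
Local Open Scope ring_scope.
Local Open Scope classical_set_scope.

Definition fsig {R : realType} (sigma : R) (f : R -> R) (x : R) : R :=
  f x / x `^ sigma.

Definition Ifsig {R : realType} (sigma : R) (f : R -> R) : R :=
  Rintegral lebesgue_measure `[0, 1] (fsig sigma f).

Definition fbar {R : realType} (sigma : R) (f : R -> R) (x : R) : R :=
  fsig sigma f x - Ifsig sigma f.

Definition Rh {R : realType} (h : R -> R) (d : nat) : R :=
  d%:R^-1 * \sum_(1 <= k < d.+1) h (k%:R / d%:R).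

Definition Ssum {R : realType} (sigma : R) (f : R -> R) (n : nat) : R :=
  \sum_(1 <= l < n.+1) \sum_(1 <= k < l.+1)
     ((k * l)%:R `^ sigma)^-1 * f (k%:R / l%:R).

Definition Theta {R : realType} (sigma : R) (f : R -> R) (n : nat) : R :=
  Ssum sigma f n - Ifsig sigma f * \sum_(1 <= l < n.+1) l%:R `^ (1 - 2 * sigma).

Definition rho {R : realType} (varpi : nat -> R) (d : nat) : R :=
  limn (fun N => \sum_(d <= n < N) (varpi n)^-1).

(** Writing [a_l = l^(1-2 sigma) |R_{bar f_sigma}(l)|], each [Theta_n] is the
    weighted sum [sum_{l <= n} l^(1-2 sigma) R_{bar f_sigma}(l)], because
    [(k l)^(-sigma) = l^(1-2 sigma) l^(-1) (k/l)^(-sigma)] and the constant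
    [int_0^1 f_sigma] is subtracted exactly [l] times in [l R_{bar f_sigma}(l)].
    Hence [sum_{n <= N} |Theta_n| / varpi(n)] is at most
    [sum_{n <= N} sum_{l <= n} a_l / varpi(n)], and exchanging the summations
    bounds this by [sum_{l <= N} a_l rho(l)].
    The identity is purely algebraic. *)
From mathcomp Require Import all_boot all_order all_algebra.
From mathcomp Require Import all_classical all_reals all_analysis.
From mathcomp Require Import ring.
Import Order.TTheory GRing.Theory Num.Theory.
Import numFieldNormedType.Exports.
Local Open Scope ring_scope.
Local Open Scope classical_set_scope.

Lemma big_nat_triangle_mulr (R : pzSemiRingType) (b w : nat -> R) m N :
  \sum_(m <= n < N) (\sum_(m <= l < n.+1) b l) * w n =
  \sum_(m <= l < N) b l * \sum_(l <= n < N) w n.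
Proof.
elim: N => [|N IH]; first by rewrite !big_geq.
have [Nm|mN] := ltnP N m; first by rewrite !big_geq.
rewrite big_nat_recr //= IH.
under [RHS]eq_big_nat => l /andP[_ lN] do rewrite big_nat_recr //= mulrDr.
rewrite big_split /= -mulr_suml [X in _ = X + _]big_nat_recr //=.
by rewrite (big_geq (leqnn N)) mulr0 addr0.
Qed.

Lemma cvgn_shiftS (R : realType) (u : R ^nat) :
  cvgn [sequence u n.+1]_n -> cvgn u.
Proof. by move=> cu; apply: cvgP (_ : u @ \oo --> _); rewrite -cvg_shiftS; exact: cu. Qed.

Lemma cvgn_sum_tail (R : realType) (u : R ^nat) m :
  cvgn (series (fun n => u n.+1)) -> cvgn (fun N => \sum_(m.+1 <= n < N) u n).
Proof.
move=> cu; apply: cvgn_shiftS.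
suff -> : [sequence \sum_(m.+1 <= n < N.+1) u n]_N =
          [sequence \sum_(m <= n < N) u n.+1]_N by rewrite is_cvg_series_restrict.
by apply/funext => N /=; rewrite big_add1.
Qed.

Lemma series_le_partial_cvg (R : realType) (u v : R ^nat) :
  (forall n, 0 <= u n) -> (forall n, 0 <= v n) ->
  (forall N, series u N <= series v N) -> cvgn (series v) -> cvgn (series u).
Proof.
move=> u_ge0 v_ge0 uv cv.
apply: nondecreasing_is_cvgn; first exact: nondecreasing_series.
exists (limn (series v)) => _ [N _ <-].
apply: le_trans (uv N) _; apply: nondecreasing_cvgn_le cv N.
exact: nondecreasing_series.
Qed.

Lemma powR_invM_ratio (R : realType) (a b s : R) : 0 < a -> 0 < b ->
  ((a * b) `^ s)^-1 = b `^ (1 - 2 * s) * b^-1 * ((a / b) `^ s)^-1.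
Proof.
move=> a_gt0 b_gt0.
have bsV : b^-1 `^ s = (b `^ s)^-1.
  by rewrite -powR_inv1 ?ltW // -powRrM mulN1r powRN.
have b2s : b `^ (2 * s) = b `^ s * b `^ s.
  by rewrite powRrM powR_mulrn ?ltW // expr2 powRM ?ltW.
rewrite powRB ?(gt_eqF b_gt0) ?implybT // b2s powRr1 ?ltW //.
rewrite powRM ?ltW // powRM ?ltW ?invr_gt0 // bsV.
have := powR_gt0 s a_gt0; have := powR_gt0 s b_gt0.
by move=> /gt_eqF bs_neq0 /gt_eqF as_neq0; field; rewrite bs_neq0 as_neq0 gt_eqF.
Qed.

Lemma Theta_Rh_fbar (R : realType) (sigma : R) f n :
  Theta sigma f n =
  \sum_(1 <= l < n.+1) l%:R `^ (1 - 2 * sigma) * Rh (fbar sigma f) l.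
Proof.
rewrite /Theta /Ssum mulr_sumr -sumrB; apply: eq_big_nat => l /andP[l_gt0 _].
have l_neq0 : l%:R != 0 :> R by rewrite pnatr_eq0 -lt0n.
under eq_big_nat => k /andP[k_gt0 _] do
  rewrite natrM powR_invM_ratio ?ltr0n // mulrAC -!mulrA.
rewrite /Rh /fbar /fsig sumrB sumr_const_nat subn1 /= -!mulr_sumr -mulr_natr.
by field.
Qed.

Lemma norm_Theta_le (R : realType) (sigma : R) f n :
  `|Theta sigma f n| <=
  \sum_(1 <= l < n.+1) l%:R `^ (1 - 2 * sigma) * `|Rh (fbar sigma f) l|.
Proof.
rewrite Theta_Rh_fbar; apply: le_trans (ler_norm_sum _ _ _) _.
by apply: ler_sum => l _; rewrite normrM ger0_norm ?powR_ge0.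
Qed.

Section WeightedTheta.
Variables (R : realType) (sigma : R) (f : R -> R) (varpi : nat -> R).
Hypothesis varpi_gt0 : forall n, (0 < n)%N -> 0 < varpi n.
Hypothesis varpi_summable : cvgn (series (fun n => (varpi n.+1)^-1)).

Lemma sum_le_rho l N :
  (0 < l)%N -> \sum_(l <= n < N) (varpi n)^-1 <= rho varpi l.
Proof.
case: l => // l _; apply: nondecreasing_cvgn_le; last exact: cvgn_sum_tail.
apply: nondecreasing_series => n ln _.
by rewrite invr_ge0 ltW // varpi_gt0 // (leq_trans _ ln).
Qed.

Lemma rho_ge0 l : (0 < l)%N -> 0 <= rho varpi l.
Proof. by move=> l_gt0; have := sum_le_rho l 0 l_gt0; rewrite big_geq. Qed.

Lemma series_Theta_le N :
  series (fun n => `|Theta sigma f n.+1| / varpi n.+1) N <=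
  series (fun d => (d.+1)%:R `^ (1 - 2 * sigma) * rho varpi d.+1
                   * `|Rh (fbar sigma f) d.+1|) N.
Proof.
have series_shift (g : R ^nat) :
    series (fun n => g n.+1) N = \sum_(1 <= n < N.+1) g n by rewrite big_add1.
rewrite (series_shift (fun n => `|Theta sigma f n| / varpi n)).
rewrite (series_shift (fun l => l%:R `^ (1 - 2 * sigma) * rho varpi l
                                * `|Rh (fbar sigma f) l|)).
set a := fun l => l%:R `^ (1 - 2 * sigma) * `|Rh (fbar sigma f) l|.
apply: (@le_trans _ _
  (\sum_(1 <= n < N.+1) (\sum_(1 <= l < n.+1) a l) * (varpi n)^-1)).
  rewrite big_nat_cond [leRHS]big_nat_cond.
  apply: ler_sum => n /andP[/andP[n_gt0 _] _].
  apply: ler_wpM2r; first by rewrite invr_ge0 ltW ?varpi_gt0.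
  exact: norm_Theta_le.
rewrite big_nat_triangle_mulr big_nat_cond [leRHS]big_nat_cond.
apply: ler_sum => l /andP[/andP[l_gt0 _] _].
rewrite mulrAC; apply: ler_wpM2r => //; apply: ler_wpM2l; first exact: powR_ge0.
exact: sum_le_rho.
Qed.

End WeightedTheta.

Theorem proposition5p13 (R : realType) (sigma : R) (f : R -> R)
  (varpi : nat -> R) :
  0 <= sigma -> sigma < 1 ->
  lebesgue_measure.-integrable `[0%R, 1%R] (EFin \o fsig sigma f) ->
  (forall n, (0 < n)%N -> 0 < varpi n) ->
  cvgn (series (fun n => (varpi n.+1)^-1)) ->
  cvgn (series (fun d => (d.+1)%:R `^ (1 - 2 * sigma) * rho varpi d.+1
                        * `|Rh (fbar sigma f) d.+1|)) ->
  cvgn (series (fun n => `|Theta sigma f n.+1| / varpi n.+1)).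
Proof.
move=> _ _ _ varpi_gt0 varpi_summable weighted_Rh_summable.
apply: series_le_partial_cvg weighted_Rh_summable.
- by move=> n; apply: divr_ge0 => //; exact/ltW/varpi_gt0.
- move=> d; apply: mulr_ge0 => //; apply: mulr_ge0; first exact: powR_ge0.
  exact: rho_ge0.
- exact: series_Theta_le.
Qed.
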